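(* Let $(X,\tau)$ be a topological space. Then: (i) every subset of $X$ is $\beta$-locally closed, and every function $f\colon (X,\tau)\to(Y,\sigma)$ into any topological space $(Y,\sigma)$ is $\beta$-LC-continuous; (ii) $(X,\tau)$ is $\beta$-submaximal.
   Context: For a subset $A$ of a topological space $(X,\tau)$, $\mathrm{cl}(A)$ and $\mathrm{int}(A)$ denote closure and interior. $A$ is $\beta$-open if $A \subseteq \mathrm{cl}(\mathrm{int}(\mathrm{cl}(A)))$, and $\beta$-closed if $X\setminus A$ is $\beta$-open. $A$ is $\beta$-locally closed if $A$ is the intersection of a $\beta$-open set and a $\beta$-closed set. The $\beta$-closure $\mathrm{cl}_\beta(A)$ is the intersection of all $\beta$-closed sets containing $A$; $A$ is $\beta$-dense if $\mathrm{cl}_\beta(A)=X$. The space $X$ is $\beta$-submaximal if every $\beta$-dense subset of $X$ is $\beta$-open. A function $f\colon (X,\tau)\to(Y,\sigma)$ is $\beta$-LC-continuous if $f^{-1}(V)$ is $\beta$-locally closed in $X$ for every open set $V\subseteq Y$. *)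

From HB Require Import structures.
From mathcomp Require Import all_boot all_order all_algebra.
From mathcomp Require Import all_classical all_reals all_analysis.
Set Implicit Arguments. Unset Strict Implicit. Unset Printing Implicit Defensive.
Local Open Scope classical_set_scope.

Section BetaDefs.
Variable X : topologicalType.

Definition beta_open (A : set X) : Prop :=
  A `<=` closure (interior (closure A)).

Definition beta_closed (A : set X) : Prop := beta_open (~` A).

Definition beta_locally_closed (A : set X) : Prop :=
  exists U F : set X, [/\ beta_open U, beta_closed F & A = U `&` F].

Definition beta_closure (A : set X) : set X :=
  \bigcap_(F in [set F : set X | beta_closed F /\ A `<=` F]) F.

Definition beta_dense (A : set X) : Prop := beta_closure A = setT.

Definition beta_submaximal : Prop :=
  forall A : set X, beta_dense A -> beta_open A.
End BetaDefs.

Definition beta_LC_continuous (X Y : topologicalType) (f : X -> Y) : Prop :=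
  forall V : set Y, open V -> beta_locally_closed (f @^-1` V).

(* Every set A is the intersection of the dense set A `|` ~` closure A and the
   closed set closure A; dense sets are beta-open and closed sets beta-closed.
   For submaximality, let A be beta-dense and G the complement of
   closure (interior (closure A)).  The open set G misses interior (closure A),
   so G `\` A is beta-open; its complement is then a beta-closed superset of A,
   hence everything, i.e. G `<=` A.  Being open, G then lies in
   interior (closure A), which it misses: G is empty and
   closure (interior (closure A)) is the whole space. *)

From mathcomp Require Import all_boot all_order all_algebra.
From mathcomp Require Import all_classical all_reals all_analysis.
Local Open Scope classical_set_scope.

Section BetaSets.
Variable X : topologicalType.
Implicit Types A B D F G U : set X.

Lemma open_beta_open U : open U -> beta_open U.
Proof.
move=> oU; have UiU : U `<=` interior (closure U).
  by rewrite -open_subsetE //; exact: subset_closure.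
by move=> x /UiU; exact: subset_closure.
Qed.

Lemma closed_beta_closed F : closed F -> beta_closed F.
Proof. by move=> cF; apply: open_beta_open; rewrite openC. Qed.

Lemma dense_beta_open D : closure D = setT -> beta_open D.
Proof. by move=> DT; rewrite /beta_open DT interiorT closureT. Qed.

Lemma closure_setU_setC_closure A : closure (A `|` ~` closure A) = setT.
Proof.
apply/seteqP; split => // x _.
have [Ax|nAx] := pselect (closure A x).
  by apply: closureS Ax => y Ay; left.
by apply: subset_closure; right.
Qed.

Lemma beta_locally_closed_all A : beta_locally_closed A.
Proof.
exists (A `|` ~` closure A), (closure A); split.
- exact/dense_beta_open/closure_setU_setC_closure.
- exact/closed_beta_closed/closed_closure.
- apply/seteqP; split=> [x Ax|x [[//|nAx] Ax]]; last by [].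
  by split; [left | exact: subset_closure].
Qed.

Lemma open_setI_closure G B : open G -> G `&` closure B `<=` closure (G `&` B).
Proof.
move=> oG x [Gx clBx] N Nx.
have [y [By [Gy Ny]]] : B `&` (G `&` N) !=set0.
  by apply: clBx; apply: filterI => //; exact: open_nbhs_nbhs.
by exists y.
Qed.

Lemma beta_open_setD G A :
  open G -> G `&` interior (closure A) = set0 -> beta_open (G `\` A).
Proof.
move=> oG GiA0 x [Gx _].
(* [G `&` ~` closure A] is an open subset of [G `\` A] that is dense in [G]. *)
have GclC : G `<=` closure (~` closure A).
  rewrite closure_setC => y Gy iAy.
  by have : (G `&` interior (closure A)) y by []; rewrite GiA0.
have oGC : open (G `&` ~` closure A).
  by apply: openI => //; rewrite openC; exact: closed_closure.
have GCsub : G `&` ~` closure A `<=` interior (closure (G `\` A)).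
  rewrite -open_subsetE // => y [Gy nAy]; apply: subset_closure.
  by split => // Ay; apply: nAy; exact: subset_closure.
apply: closureS GCsub _ _; apply: open_setI_closure => //.
by split => //; exact: GclC.
Qed.

Lemma beta_closure_subset A F : beta_closed F -> A `<=` F -> beta_closure A `<=` F.
Proof. by move=> bF AF; exact: (bigcap_inf (i := F)). Qed.

Lemma beta_dense_closure_interior_closure A :
  beta_dense A -> closure (interior (closure A)) = setT.
Proof.
move=> dA; set G := ~` closure (interior (closure A)).
have oG : open G by rewrite openC; exact: closed_closure.
have GiA0 : G `&` interior (closure A) = set0.
  by apply/seteqP; split => // y [Gy iAy]; apply: Gy; exact: subset_closure.
have GA : G `<=` A.
  have bc : beta_closed (~` (G `\` A)).
    by rewrite /beta_closed setCK; exact: beta_open_setD.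
  have AGA : A `<=` ~` (G `\` A) by move=> y Ay [_ nAy].
  move=> y Gy; apply: contrapT => nAy.
  have : beta_closure A y by rewrite dA.
  by move/(beta_closure_subset _ _ bc AGA)/(_ (conj Gy nAy)).
have G0 : G = set0.
  have GiA : G `<=` interior (closure A).
    by rewrite -open_subsetE // => y /GA; exact: subset_closure.
  by rewrite -GiA0; apply/seteqP; split=> [y Gy|y []//]; split => //; exact: GiA.
by apply/seteqP; split => // x _; apply: contrapT => nx; have : G x by []; rewrite G0.
Qed.

Lemma beta_submaximal_all : beta_submaximal X.
Proof.
by move=> A dA; rewrite /beta_open beta_dense_closure_interior_closure.
Qed.

End BetaSets.

Theorem corollary2p2 (X : topologicalType) :
  ((forall A : set X, beta_locally_closed A) /\
   (forall (Y : topologicalType) (f : X -> Y), beta_LC_continuous f)) /\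
  beta_submaximal X.
Proof.
split; last exact: beta_submaximal_all.
by split=> [|Y f V _]; exact: beta_locally_closed_all.
Qed.
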